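(* Fix $x_0$, $\tau\in(0,1)$, $v\in B(0,\rho_{\max})$. There exist, for each $i\in\{2,\dots,T\}$, a finite set $\mathcal{L}_i$ of sequences of non-negative integers of length $i-1$ and finite positive constants $\beta_i^{(j_1,\dots,j_{i-1})}(x_0)$, depending on $x_0$ and $(j_1,\dots,j_{i-1})$ but not on $\epsilon$, the perturbed control $u^\epsilon$, or the observations, such that for every nominal control $u\in U$ left continuous at $\tau$, every sequence of observations $(y_1,\dots,y_T)$, every $\epsilon\in[0,\tau)$, every $i\in\{2,\dots,T\}$ and every $t\in[i-1,i]$, $$\|\Psi_i^\epsilon(t)\|_2\le\sum_{(j_1,\dots,j_{i-1})\in\mathcal{L}_i}\beta_i^{(j_1,\dots,j_{i-1})}(x_0)\prod_{m=1}^{i-1}\|y_m\|_2^{j_m}.$$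
   Context: Fix positive integers $T,m,n_x,n_y$ and $\rho_{\max}\in(0,\infty)$; $B(0,\rho_{\max})$ is the closed Euclidean ball of radius $\rho_{\max}$ in $\mathbb{R}^m$; $U$ is the set of piecewise continuous $u:[0,T]\to\mathbb{R}^m$ with $\|u(t)\|_2\le\rho_{\max}$ for all $t$. $f:\mathbb{R}^{n_x}\times\mathbb{R}^m\to\mathbb{R}^{n_x}$ is continuously differentiable and there is $K_1\in[1,\infty)$ with $\|f(x',u')-f(x'',u'')\|_2\le K_1(\|x'-x''\|_2+\|u'-u''\|_2)$ for all $x',x''$ and $u',u''\in B(0,\rho_{\max})$. $g:\mathbb{R}^{n_x}\times\mathbb{R}^{n_y}\to\mathbb{R}^{n_x}$ is continuous and differentiable in its first argument, and there are $K_2,\dots,K_5\ge0$ and positive integers $L_1,L_2$ such that for all $x,y$ both $\|g(x,y)\|_2$ and $\|\frac{\partial}{\partial x}g(x,y)\|_2$ are at most $K_2+K_3\|x\|_2^{L_1}+K_4\|y\|_2^{L_2}+K_5\|x\|_2^{L_1}\|y\|_2^{L_2}$. For a control $w\in U$ the hybrid trajectory from $x_0$ is: $x_1$ on $[0,1]$ solves $\dot x_1=f(x_1,w)$, $x_1(0)=x_0$; for $i=2,\dots,T$, $x_i$ on $[i-1,i]$ solves $\dot x_i=f(x_i,w)$ with $x_i(i-1)=g(x_{i-1}(i-1),y_{i-1})$. Perturbed control: for $\epsilon\in[0,\tau]$, $u^\epsilon(t)=v$ if $t\in(\tau-\epsilon,\tau]$ and $u^\epsilon(t)=u(t)$ otherwise;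 $x_i^\epsilon$ are the modes of the trajectory under $u^\epsilon$. For $\epsilon\in[0,\tau)$, $\Psi_1^\epsilon$ is the solution on $[\tau-\epsilon,1]$ of $\dot\Psi_1^\epsilon=\frac{\partial}{\partial x}f(x_1^\epsilon,u^\epsilon)\Psi_1^\epsilon$ with $\Psi_1^\epsilon(\tau-\epsilon)=f(x_1^\epsilon(\tau-\epsilon),v)-f(x_1^\epsilon(\tau-\epsilon),u^\epsilon(\tau-\epsilon))$, and for $i\ge2$, $\Psi_i^\epsilon$ is the solution on $[i-1,i]$ of $\dot\Psi_i^\epsilon=\frac{\partial}{\partial x}f(x_i^\epsilon,u^\epsilon)\Psi_i^\epsilon$ with $\Psi_i^\epsilon(i-1)=\frac{\partial}{\partial x}g(x_{i-1}^\epsilon(i-1),y_{i-1})\Psi_{i-1}^\epsilon(i-1)$. (These are the pieces of the right derivative $\frac{\partial_+}{\partial\epsilon}x^\epsilon(t)$.) *)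

From HB Require Import structures.
From mathcomp Require Import all_boot all_order all_algebra.
From mathcomp Require Import all_classical all_reals all_analysis.
Set Implicit Arguments. Unset Strict Implicit. Unset Printing Implicit Defensive.
Import Order.TTheory GRing.Theory Num.Theory.
Import numFieldNormedType.Exports.
Local Open Scope classical_set_scope.
Local Open Scope ring_scope.

Definition norm2 {R : realType} {n : nat} (v : 'cV[R]_n) : R :=
  Num.sqrt (\sum_(i < n) (v i 0) ^+ 2).

Definition piecewise_continuous {R : realType} {n : nat}
    (a b : R) (u : R -> 'cV[R]_n) : Prop :=
  exists s : seq R,
    (forall t, a < t < b -> t \notin s -> {for t, continuous u}) /\
    (forall t, a < t <= b -> exists l : 'cV[R]_n, u x @[x --> t^'-] --> l) /\
    (forall t, a <= t < b -> exists l : 'cV[R]_n, u x @[x --> t^'+] --> l).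

Definition admissible {R : realType} {m : nat} (T : nat) (rho : R)
    (u : R -> 'cV[R]_m) : Prop :=
  piecewise_continuous 0 T%:R u /\
  (forall t, 0 <= t <= T%:R -> norm2 (u t) <= rho).

Definition needle {R : realType} {m : nat} (u : R -> 'cV[R]_m)
    (v : 'cV[R]_m) (tau eps : R) : R -> 'cV[R]_m :=
  fun t => if (tau - eps < t) && (t <= tau) then v else u t.

(* x solves dx/dt = F t (x t) on [a,b] with x a = x0, where F t is
   piecewise continuous in t through the control w: x is continuous on
   [a,b] and differentiable with derivative F t (x t) at every interior
   time where the control w is continuous (i.e. off the finitely many
   switching times of the piecewise continuous control). *)
Definition solves_on {R : realType} {n m : nat} (a b : R)
    (w : R -> 'cV[R]_m) (F : R -> 'cV[R]_n -> 'cV[R]_n)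
    (x0 : 'cV[R]_n) (x : R -> 'cV[R]_n) : Prop :=
  x a = x0 /\
  {within `[a, b], continuous x} /\
  (forall t, a < t < b -> {for t, continuous w} ->
     is_derive t 1 x (F t (x t))).

Definition dx_f {R : realType} {n m : nat}
    (f : 'cV[R]_n * 'cV[R]_m -> 'cV[R]_n) (x : 'cV[R]_n) (u : 'cV[R]_m)
    (d : 'cV[R]_n) : 'cV[R]_n :=
  'd (fun z => f (z, u)) x d.

(* Hybrid trajectory (modes x 1 .. x T) from x0 under control w and
   observations y (y 1 .. y T). *)
Definition hybrid_traj {R : realType} {nx m ny : nat} (T : nat)
    (f : 'cV[R]_nx * 'cV[R]_m -> 'cV[R]_nx)
    (g : 'cV[R]_nx * 'cV[R]_ny -> 'cV[R]_nx)
    (x0 : 'cV[R]_nx) (w : R -> 'cV[R]_m) (y : nat -> 'cV[R]_ny)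
    (x : nat -> R -> 'cV[R]_nx) : Prop :=
  solves_on 0 1 w (fun t z => f (z, w t)) x0 (x 1%N) /\
  (forall i, (2 <= i <= T)%N ->
     solves_on (i.-1)%:R i%:R w (fun t z => f (z, w t))
       (g (x i.-1 (i.-1)%:R, y i.-1)) (x i)).

(* The pieces Psi 1 .. Psi T of the right derivative of x^eps, given the
   perturbed trajectory xe (under ue = needle u v tau eps). *)
Definition psi_pieces {R : realType} {nx m ny : nat} (T : nat)
    (f : 'cV[R]_nx * 'cV[R]_m -> 'cV[R]_nx)
    (g : 'cV[R]_nx * 'cV[R]_ny -> 'cV[R]_nx)
    (ue : R -> 'cV[R]_m) (v : 'cV[R]_m) (tau eps : R)
    (y : nat -> 'cV[R]_ny)
    (xe : nat -> R -> 'cV[R]_nx) (Psi : nat -> R -> 'cV[R]_nx) : Prop :=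
  solves_on (tau - eps) 1 ue (fun t z => dx_f f (xe 1%N t) (ue t) z)
    (f (xe 1%N (tau - eps), v) - f (xe 1%N (tau - eps), ue (tau - eps)))
    (Psi 1%N) /\
  (forall i, (2 <= i <= T)%N ->
     solves_on (i.-1)%:R i%:R ue (fun t z => dx_f f (xe i t) (ue t) z)
       ('d (fun z => g (z, y i.-1)) (xe i.-1 (i.-1)%:R)
           (Psi i.-1 (i.-1)%:R))
       (Psi i)).

From HB Require Import structures.
From mathcomp Require Import all_boot all_order all_algebra.
From mathcomp Require Import all_classical all_reals all_analysis.
From mathcomp Require Import ring lra.
Import Order.TTheory GRing.Theory Num.Theory.
Import numFieldNormedType.Exports.
Local Open Scope classical_set_scope.
Local Open Scope ring_scope.

(* Between two resets, the state and the sensitivity solve ODEs whose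
   right-hand sides grow at most affinely (f is Lipschitz, so its partial
   Jacobian is bounded by K1); on a window of length at most 1 a Gronwall
   estimate bounds them by a fixed multiple of their value at the start of
   the window plus a constant, the needle only adding two discontinuities of
   the control.  A reset through g, or through its Jacobian for the
   sensitivity, turns a bound C * prod_(j<k) (1 + |y_j|)^D into one of the
   same shape with a larger C and D, so by induction on the mode the bound
   on Psi_i has this shape with constants depending only on x0.  Finally
   (1 + r)^D <= 2^D (1 + r^D) expands the product into a sum over exponent
   sequences with entries in {0, D}. *)

Section Norm2.
Context {R : realType} {n : nat}.
Implicit Types v w : 'cV[R]_n.

Definition sqnorm2 v : R := \sum_(i < n) (v i 0) ^+ 2.

Lemma sqnorm2_ge0 v : 0 <= sqnorm2 v.
Proof. by apply: sumr_ge0 => i _; rewrite sqr_ge0. Qed.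

Lemma norm2_ge0 v : 0 <= norm2 v.
Proof. exact: sqrtr_ge0. Qed.

Lemma sqr_norm2 v : norm2 v ^+ 2 = sqnorm2 v.
Proof. by rewrite /norm2 sqr_sqrtr // sqnorm2_ge0. Qed.

Lemma norm2_le_sqr v c : 0 <= c -> sqnorm2 v <= c ^+ 2 -> norm2 v <= c.
Proof.
by move=> c0 h; rewrite /norm2 -(ger0_norm c0) -sqrtr_sqr ler_sqrt ?sqr_ge0.
Qed.

Lemma norm2Z (c : R) v : norm2 (c *: v) = `|c| * norm2 v.
Proof.
rewrite /norm2 -sqrtr_sqr -sqrtrM ?sqr_ge0 //; congr Num.sqrt.
by rewrite mulr_sumr; apply: eq_bigr => i _; rewrite !mxE exprMn.
Qed.

Lemma norm2N v : norm2 (- v) = norm2 v.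
Proof. by rewrite -scaleN1r norm2Z normrN normr1 mul1r. Qed.

Lemma norm20 : norm2 (0 : 'cV[R]_n) = 0.
Proof. by rewrite -(scale0r (0 : 'cV[R]_n)) norm2Z normr0 mul0r. Qed.

(* The factor 2 spares us Cauchy-Schwarz. *)
Lemma norm2D_le v w : norm2 (v + w) <= 2 * (norm2 v + norm2 w).
Proof.
apply: norm2_le_sqr; first by rewrite mulr_ge0 // addr_ge0 ?norm2_ge0.
have sqD : sqnorm2 (v + w) <= 2 * (sqnorm2 v + sqnorm2 w).
  rewrite /sqnorm2 -big_split /= mulr_sumr ler_sum // => i _; rewrite !mxE.
  have := sqr_ge0 (v i 0 - w i 0); nra.
apply: (le_trans sqD); rewrite -!sqr_norm2.
have := norm2_ge0 v; have := norm2_ge0 w; nra.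
Qed.

Lemma sqnorm2_continuous : continuous (sqnorm2 : 'cV[R]_n -> R).
Proof.
apply: (@continuous_big R 'I_n +%R 0 predT _ 'cV[R]_n (index_enum 'I_n)
   (fun i (v : 'cV[R]_n) => v i 0 ^+ 2)) => [|i _ w]; first exact: add_continuous.
have coord := @coord_continuous R n 1 i 0 w.
have -> : (fun v : 'cV[R]_n => v i 0 ^+ 2) = (fun v => v i 0 * v i 0).
  by apply/funext => u; rewrite expr2.
exact: (cvgM coord coord).
Qed.

Lemma norm2_continuous : continuous (norm2 : 'cV[R]_n -> R).
Proof.
by move=> v; apply: continuous_comp; [exact: sqnorm2_continuous|exact: sqrt_continuous].
Qed.

End Norm2.

Lemma norm2_diff_le {R : realType} {n p : nat} (h : 'cV[R]_n -> 'cV[R]_p)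
    (x d : 'cV[R]_n) (K : R) :
  differentiable h x ->
  (forall a b, norm2 (h a - h b) <= K * norm2 (a - b)) ->
  norm2 ('d h x d) <= K * norm2 d.
Proof.
move=> hx h_lip; rewrite -deriveE //.
have norm2_quot := continuous_cvg _ (norm2_continuous _) (diff_derivable (v:=d) hx).
apply: (closed_cvg _ (@closed_le R (K * norm2 d)) _ _ (norm2_quot _)).
near=> r.
have r0 : r != 0 by near: r; exact: nbhs_dnbhs_neq.
have := h_lip (r *: d + x) x.
by rewrite /= addrK !norm2Z normfV ler_pdivrMl ?normr_gt0 // mulrCA.
Unshelve. all: by end_near. Qed.

Lemma ler0_derive1_nincr_except {R : realType} (psi : R -> R) (s : seq R) (a b : R) :
  {within `[a, b], continuous psi} ->
  (forall t, a < t < b -> t \notin s -> derivable psi t 1 /\ derive1 psi t <= 0) ->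
  forall t, a <= t <= b -> psi t <= psi a.
Proof.
elim: s a b => [|p s IH] a b psi_cont psi_nincr t /andP[a_t t_b].
  have ab := le_trans a_t t_b.
  apply: (ler0_derive1_nincr _ _ psi_cont) => // z; rewrite in_itv /= => z_ab;
    by have [] := psi_nincr z z_ab isT.
have psi_nincr_avoiding c d : a <= c -> d <= b -> (p <= c) || (d <= p) ->
    forall t, c <= t <= d -> psi t <= psi c.
  move=> ac db p_out; apply: IH.
    by apply: continuous_subspaceW psi_cont; apply: subset_itv; rewrite bnd_simp.
  move=> z /andP[cz zd] zs; apply: psi_nincr.
    by rewrite (le_lt_trans ac cz) (lt_le_trans zd db).
  rewrite in_cons negb_or zs andbT; apply/eqP => zp; move: p_out.
  by rewrite -zp leNgt cz /= leNgt zd.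
have [/andP[ap pb] | p_out] := boolP ((a < p) && (p < b)); last first.
  apply: (psi_nincr_avoiding a b) => //; last by rewrite a_t t_b.
  by move: p_out; rewrite negb_and -!leNgt => /orP[] ->; rewrite ?orbT.
have [tp|pt] := lerP t p.
  by apply: (psi_nincr_avoiding a p); rewrite ?lexx ?orbT ?(ltW pb) ?a_t.
apply: (@le_trans _ _ (psi p)).
  by apply: (psi_nincr_avoiding p b); rewrite ?lexx ?(ltW ap) ?(ltW pt).
by apply: (psi_nincr_avoiding a p); rewrite ?lexx ?orbT ?(ltW pb) ?(ltW ap).
Qed.

Section SqNorm2Derive.
Context {R : realType} {n : nat}.

Lemma sqnorm2_is_derive {x : R -> 'cV[R]_n} {D : 'cV[R]_n} {t : R} :
  is_derive t 1 x D ->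
  is_derive t 1 (sqnorm2 \o x) (\sum_(i < n) 2 * (x t i 0 * D i 0)).
Proof.
move=> x_D; have dx : derivable x t 1 by case: x_D.
have coord_D i : is_derive t 1 (fun s => x s i 0) (D i 0).
  split; first exact: (derivable_mxP x t 1).1 dx i 0.
  have := derive_mx dx; rewrite (@derive_val _ _ _ _ _ _ _ x_D).
  by move/(congr1 (fun M : 'cV[R]_n => M i 0)); rewrite mxE => ->.
have -> : sqnorm2 \o x = \sum_(i < n) (fun s => x s i 0 * x s i 0).
  by apply/funext => s; rewrite fct_sumE; apply: eq_bigr => i _; rewrite expr2.
apply: is_derive_eq.
by apply: eq_bigr => i _; rewrite -mulr2n mulr_natl mulr2n.
Qed.

Lemma dot2_le_sqnorm2 (v w : 'cV[R]_n) :
  \sum_(i < n) 2 * (v i 0 * w i 0) <= sqnorm2 v + sqnorm2 w.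
Proof.
rewrite /sqnorm2 -big_split ler_sum // => i _ /=.
have := sqr_ge0 (v i 0 - w i 0); nra.
Qed.

Lemma sqnorm2_le_affine {v w : 'cV[R]_n} {al be : R} :
  0 <= al -> 0 <= be -> norm2 w <= al + be * norm2 v ->
  sqnorm2 w <= 2 * al ^+ 2 + 2 * be ^+ 2 * sqnorm2 v.
Proof.
move=> al0 be0 wv; rewrite -!sqr_norm2.
have bv0 : 0 <= be * norm2 v by rewrite mulr_ge0 ?norm2_ge0.
have := sqr_ge0 (al - be * norm2 v); have := norm2_ge0 w; nra.
Qed.

End SqNorm2Derive.

Section Gronwall.
Context {R : realType} {n : nat}.
Variables (x D : R -> 'cV[R]_n) (a b al be : R) (s : seq R).
Hypotheses (b_le : b <= a + 1) (al0 : 0 <= al) (be0 : 0 <= be).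
Hypothesis x_cont : {within `[a, b], continuous x}.
Hypothesis x_D : forall t, a < t < b -> t \notin s -> is_derive t 1 x (D t).
Hypothesis D_le : forall t, a < t < b -> t \notin s ->
  norm2 (D t) <= al + be * norm2 (x t).

Let K := 1 + 2 * be ^+ 2.
Let A := 2 * al ^+ 2.

Let expNK_is_derive (t : R) :
  is_derive t 1 (fun r => expR (- K * r)) (- K * expR (- K * t)).
Proof.
have lin : is_derive t 1 (fun r : R => - K * r) (- K).
  have -> : (fun r : R => - K * r) = (- K) \*: id by apply/funext.
  apply: is_derive_eq (is_deriveZ (- K) (is_derive_id t (1 : R))) _.
  by rewrite /GRing.scale /= mulr1.
by rewrite mulrC; exact: (is_derive1_comp (is_derive_expR (- K * t)) lin).
Qed.

(* [K = 1 + 2 be^2] is what makes this weighted squared norm nonincreasing. *)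
Let weighted_sqnorm2_nincr t : a <= t <= b ->
  (sqnorm2 (x t) + A) * expR (- K * t) <= (sqnorm2 (x a) + A) * expR (- K * a).
Proof.
apply: (@ler0_derive1_nincr_except _
  (fun r => (sqnorm2 (x r) + A) * expR (- K * r)) s) => [r|r rab rs].
  apply: cvgM.
    apply: cvgD; last exact: cvg_cst.
    exact: (continuous_cvg _ (sqnorm2_continuous _) (x_cont r)).
  apply: continuous_subspaceT => z.
  by apply/differentiable_continuous/derivable1_diffP; case: (expNK_is_derive z).
have sq_D : is_derive r 1 (fun z => sqnorm2 (x z) + A)
    (\sum_(i < n) 2 * (x r i 0 * D r i 0)).
  by have := is_deriveD (sqnorm2_is_derive (x_D r rab rs)) (is_derive_cst A r 1);
    rewrite addr0.
have psi_D := is_deriveM sq_D (expNK_is_derive r).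
split; first by case: psi_D.
rewrite derive1E (@derive_val _ _ _ _ _ _ _ psi_D) /GRing.scale /=.
have dot_le := dot2_le_sqnorm2 (x r) (D r).
have D_sq := sqnorm2_le_affine al0 be0 (D_le r rab rs).
have -> : (sqnorm2 (x r) + A) * (- K * expR (- K * r)) +
    expR (- K * r) * \sum_(i < n) 2 * (x r i 0 * D r i 0) =
  expR (- K * r) * (\sum_(i < n) 2 * (x r i 0 * D r i 0) - K * (sqnorm2 (x r) + A)).
  by ring.
rewrite pmulr_rle0 ?expR_gt0 // subr_le0.
have A_le : A <= K * A.
  by rewrite ler_peMl ?mulr_ge0 ?sqr_ge0 // lerDl mulr_ge0 ?sqr_ge0.
rewrite /K /A in dot_le D_sq A_le *; lra.
Qed.

Lemma gronwall_norm2 t : a <= t <= b ->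
  norm2 (x t) <= expR K * (norm2 (x a) + 2 * al).
Proof.
move=> /[dup] tab /andP[a_t t_b].
have := weighted_sqnorm2_nincr t tab.
have -> : expR (- K * a) = expR (- K * t) * expR (K * (t - a)).
  by rewrite -expRD; congr expR; ring.
rewrite mulrA mulrAC ler_pM2r ?expR_gt0 // => sq_le.
have exp_le : expR (K * (t - a)) <= expR K.
  have K0 : 0 <= K by rewrite addr_ge0 ?mulr_ge0 ?sqr_ge0.
  by rewrite ler_expR; apply: ler_piMr => //; rewrite lerBlDl (le_trans t_b).
have expK_ge1 : 1 <= expR K.
  by have := expR_ge1Dx K; rewrite /K; have := sqr_ge0 be; lra.
have xa0 := norm2_ge0 (x a).
apply: (@norm2_le_sqr R n); first by rewrite mulr_ge0 ?expR_ge0 ?addr_ge0 ?mulr_ge0.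
have A0 : 0 <= A by rewrite mulr_ge0 ?sqr_ge0.
have xa_A0 : 0 <= sqnorm2 (x a) + A by rewrite addr_ge0 ?sqnorm2_ge0.
have xt_le : sqnorm2 (x t) <= (sqnorm2 (x a) + A) * expR K.
  apply: le_trans (ler_wpM2l xa_A0 exp_le); apply: le_trans sq_le.
  by rewrite lerDl.
have xa_A_le : sqnorm2 (x a) + A <= (norm2 (x a) + 2 * al) ^+ 2.
  rewrite -sqr_norm2 /A; have := mulr_ge0 xa0 al0; have := sqr_ge0 al; nra.
apply: (le_trans xt_le); rewrite exprMn mulrC.
apply: ler_pM; rewrite ?expR_ge0 //.
by rewrite expr2 ler_peMl.
Qed.

End Gronwall.

Section Needle.
Context {R : realType} {m : nat}.
Variables (u : R -> 'cV[R]_m) (v : 'cV[R]_m) (tau eps : R).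

Lemma needle_continuous t : {for t, continuous u} -> t != tau - eps -> t != tau ->
  {for t, continuous (needle u v tau eps)}.
Proof.
move=> u_cont t_start t_end.
have needle_u z : ~~ ((tau - eps < z) && (z <= tau)) -> needle u v tau eps z = u z.
  by move=> z_out; rewrite /needle (negbTE z_out).
have [t_lt|t_gt|t_eq] := ltgtP t (tau - eps); last by rewrite t_eq eqxx in t_start.
  rewrite /prop_for /continuous_at needle_u; last by rewrite negb_and -leNgt ltW.
  apply: cvg_trans u_cont; apply: near_eq_cvg; near=> z; apply/esym/needle_u.
  have z_lt : z < tau - eps by near: z; exact: lt_nbhsl.
  by rewrite negb_and -leNgt ltW.
have [t_lt'|t_gt'|t_eq'] := ltgtP t tau; last by rewrite t_eq' eqxx in t_end.
  apply: cvg_near_cst; near=> z; rewrite /needle.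
  have -> : tau - eps < z by near: z; exact: lt_nbhsr.
  have -> : z <= tau by apply: ltW; near: z; exact: lt_nbhsl.
  by rewrite t_gt (ltW t_lt').
rewrite /prop_for /continuous_at needle_u; last by rewrite negb_and -ltNge t_gt' orbT.
apply: cvg_trans u_cont; apply: near_eq_cvg; near=> z; apply/esym/needle_u.
have z_gt : tau < z by near: z; exact: lt_nbhsr.
by rewrite negb_and -ltNge z_gt orbT.
Unshelve. all: by end_near. Qed.

Lemma needle_norm2_le (rho : R) t :
  norm2 (u t) <= rho -> norm2 v <= rho -> norm2 (needle u v tau eps t) <= rho.
Proof. by rewrite /needle; case: ifP. Qed.

Lemma solves_on_needle_norm2_le {n : nat} (s : seq R) (a b al be : R)
    (F : R -> 'cV[R]_n -> 'cV[R]_n) (z0 : 'cV[R]_n) (X : R -> 'cV[R]_n) :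
  (forall t, a < t < b -> t \notin s -> {for t, continuous u}) ->
  b <= a + 1 -> 0 <= al -> 0 <= be ->
  (forall t z, a < t < b -> norm2 (F t z) <= al + be * norm2 z) ->
  solves_on a b (needle u v tau eps) F z0 X ->
  forall t, a <= t <= b -> norm2 (X t) <= expR (1 + 2 * be ^+ 2) * (norm2 z0 + 2 * al).
Proof.
move=> u_cont b_le al0 be0 F_le [<- [X_cont X_D]].
apply: (@gronwall_norm2 R n X (fun t => F t (X t)) a b al be (s ++ [:: tau - eps; tau])) => //
  t t_ab; rewrite mem_cat !inE negb_or => /andP[ts]; rewrite negb_or => /andP[t1 t2].
  by apply: X_D => //; apply: needle_continuous => //; exact: u_cont.
exact: F_le.
Qed.

End Needle.

Fixpoint seqs0D (n D : nat) : seq (seq nat) :=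
  if n is n'.+1 then [seq 0%N :: j | j <- seqs0D n' D] ++ [seq D :: j | j <- seqs0D n' D]
  else [:: [::]].

Lemma size_seqs0D n D j : j \in seqs0D n D -> size j = n.
Proof.
elim: n j => [|n IH] j /=; first by rewrite inE => /eqP ->.
by rewrite mem_cat => /orP[] /mapP[k /IH k_n ->] /=; rewrite k_n.
Qed.

Lemma uniq_seqs0D n D : (0 < D)%N -> uniq (seqs0D n D).
Proof.
case: D => // D _; elim: n => [|n IH] //=.
rewrite cat_uniq !map_inj_uniq // ?IH ?andbT /=; try by move=> a b [].
by apply/hasPn => z /mapP[k _ ->]; apply/negP => /mapP[l _] [].
Qed.

Lemma prod_1DX_seqs0D {R : comPzRingType} n D (r : nat -> R) :
  \prod_(k < n) (1 + r k ^+ D) =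
  \sum_(j <- seqs0D n D) \prod_(k < n) r k ^+ nth 0%N j k.
Proof.
elim: n r => [|n IH] r /=; first by rewrite big_ord0 big_seq1 big_ord0.
rewrite big_ord_recl (IH (fun k => r k.+1)) big_cat /= !big_map.
rewrite mulrDl mul1r mulr_sumr; congr (_ + _); apply: eq_bigr => j _.
  by rewrite big_ord_recl /= expr0 mul1r.
by rewrite big_ord_recl.
Qed.

Lemma exprD1_le {R : realDomainType} (r : R) D :
  0 <= r -> (1 + r) ^+ D <= 2 ^+ D * (1 + r ^+ D).
Proof.
move=> r0; have rD := exprn_ge0 D r0; have two_D : 0 <= 2 ^+ D :> R by exact: exprn_ge0.
have [r1|r1] := lerP r 1.
  apply: (@le_trans _ _ (2 ^+ D)); first by apply: lerXn2r; rewrite ?nnegrE; lra.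
  by rewrite ler_peMr // lerDl.
apply: (@le_trans _ _ ((2 * r) ^+ D)); first by apply: lerXn2r; rewrite ?nnegrE; lra.
by rewrite exprMn ler_wpM2l // lerDr.
Qed.

Section ObsWeight.
Context {R : realType} {ny : nat}.
Variable y : nat -> 'cV[R]_ny.

Definition obs_weight (k D : nat) : R := \prod_(j < k) (1 + norm2 (y j.+1)) ^+ D.

Lemma obs_weight_ge1 k D : 1 <= obs_weight k D.
Proof.
rewrite /obs_weight; elim/big_ind: _ => [//|a b a1 b1|i _]; first by rewrite -[1]mulr1 ler_pM.
by apply: exprn_ege1; rewrite lerDl norm2_ge0.
Qed.

Lemma obs_weight_ge0 k D : 0 <= obs_weight k D.
Proof. exact: le_trans ler01 (obs_weight_ge1 k D). Qed.

Lemma le_obs_weight k D D' : (D <= D')%N -> obs_weight k D <= obs_weight k D'.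
Proof.
move=> DD'; apply: ler_prod => i _; have y0 := norm2_ge0 (y i.+1).
by rewrite exprn_ge0 ?addr_ge0 // ler_weXn2l // lerDl.
Qed.

Lemma obs_weightX k D e : obs_weight k D ^+ e = obs_weight k (D * e).
Proof. by rewrite -prodrXl; apply: eq_bigr => i _; rewrite exprM. Qed.

Lemma obs_weightS k D : obs_weight k.+1 D = obs_weight k D * (1 + norm2 (y k.+1)) ^+ D.
Proof. by rewrite /obs_weight big_ord_recr. Qed.

Lemma obs_weight_le_poly k D :
  obs_weight k D <= 2 ^+ (D * k) *
    \sum_(j <- seqs0D k D) \prod_(i < k) norm2 (y i.+1) ^+ nth 0%N j i.
Proof.
have -> : (2 : R) ^+ (D * k) = \prod_(i < k) 2 ^+ D by rewrite prodr_const card_ord exprM.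
rewrite -(prod_1DX_seqs0D k D (fun i => norm2 (y i.+1))).
rewrite -big_split /=; apply: ler_prod => i _; have y0 := norm2_ge0 (y i.+1).
by rewrite exprn_ge0 ?addr_ge0 // exprD1_le.
Qed.

Lemma obs_weight_next k D L1 L2 :
  obs_weight k D ^+ L1.+1 * (1 + norm2 (y k.+1)) ^+ L2 <=
  obs_weight k.+1 (D * L1.+1 + L2).
Proof.
have y0 := norm2_ge0 (y k.+1).
rewrite obs_weightS obs_weightX; apply: ler_pM.
- exact: obs_weight_ge0.
- by rewrite exprn_ge0 ?addr_ge0.
- by rewrite le_obs_weight // leq_addr.
- by rewrite ler_weXn2l ?leq_addl // lerDl.
Qed.

Lemma scaled_obs_weight_le_poly k D {C : R} : 0 <= C ->
  C * obs_weight k D <= \sum_(j <- seqs0D k D.+1)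
    (C + 1) * 2 ^+ (D.+1 * k) * \prod_(i < k) norm2 (y i.+1) ^+ nth 0%N j i.
Proof.
move=> C0; rewrite -big_distrr /=.
apply: (@le_trans _ _ ((C + 1) * obs_weight k D.+1)).
  by apply: ler_pM; rewrite ?obs_weight_ge0 ?lerDl ?le_obs_weight.
rewrite -mulrA ler_wpM2l ?addr_ge0 //; exact: obs_weight_le_poly.
Qed.

End ObsWeight.

Lemma reset_poly_le {R : realDomainType} {K2 K3 K4 K5 C Q r X : R} (L1 L2 : nat) :
  0 <= K2 -> 0 <= K3 -> 0 <= K4 -> 0 <= K5 -> 0 <= C -> 1 <= Q -> 0 <= r ->
  0 <= X -> X <= C * Q ->
  K2 + K3 * X ^+ L1 + K4 * r ^+ L2 + K5 * X ^+ L1 * r ^+ L2 <=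
  (K2 + K3 * C ^+ L1 + K4 + K5 * C ^+ L1) * (Q ^+ L1 * (1 + r) ^+ L2).
Proof.
move=> K20 K30 K40 K50 C0 Q1 r0 X0 XC.
have QL1 : 1 <= Q ^+ L1 by exact: exprn_ege1.
have B1 : 1 <= (1 + r) ^+ L2 by apply: exprn_ege1; rewrite lerDl.
set Z := Q ^+ L1 * (1 + r) ^+ L2.
have Z1 : 1 <= Z by rewrite -[1]mulr1 ler_pM.
have XL1 : X ^+ L1 <= C ^+ L1 * Q ^+ L1.
  by rewrite -exprMn lerXn2r // nnegrE mulr_ge0 // (le_trans ler01 Q1).
have rL2 : r ^+ L2 <= (1 + r) ^+ L2 by rewrite lerXn2r ?nnegrE ?addr_ge0 // lerDr.
have CQ0 : 0 <= C ^+ L1 * Q ^+ L1 by rewrite mulr_ge0 ?exprn_ge0 // (le_trans ler01).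
have X_Z : X ^+ L1 <= C ^+ L1 * Z.
  by rewrite /Z mulrA; apply: le_trans XL1 _; rewrite ler_peMr.
have r_Z : r ^+ L2 <= Z by apply: le_trans rL2 _; rewrite /Z ler_peMl // (le_trans ler01).
have Xr_Z : X ^+ L1 * r ^+ L2 <= C ^+ L1 * Z.
  rewrite /Z mulrA; apply: ler_pM; rewrite ?exprn_ge0 //.
rewrite !mulrDl -!mulrA; apply: lerD; first apply: lerD; first apply: lerD.
- by rewrite ler_peMr.
- by rewrite ler_wpM2l.
- by rewrite ler_wpM2l.
- by rewrite ler_wpM2l.
Qed.

Section ModeBounds.
Context {R : realType} {T m nx ny : nat} {rho : R}.
Context {f : 'cV[R]_nx * 'cV[R]_m -> 'cV[R]_nx} {g : 'cV[R]_nx * 'cV[R]_ny -> 'cV[R]_nx}.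
Context {K1 K2 K3 K4 K5 : R} {L1 L2 : nat}.
Hypothesis rho_ge0 : 0 <= rho.
Hypothesis f_diff : forall p, differentiable f p.
Hypothesis K1_ge1 : 1 <= K1.
Hypothesis f_lip : forall x' x'' u' u'', norm2 u' <= rho -> norm2 u'' <= rho ->
  norm2 (f (x', u') - f (x'', u'')) <= K1 * (norm2 (x' - x'') + norm2 (u' - u'')).
Hypotheses (K2_ge0 : 0 <= K2) (K3_ge0 : 0 <= K3) (K4_ge0 : 0 <= K4) (K5_ge0 : 0 <= K5).
Let G (x : 'cV[R]_nx) (y : 'cV[R]_ny) : R :=
  K2 + K3 * norm2 x ^+ L1 + K4 * norm2 y ^+ L2 + K5 * norm2 x ^+ L1 * norm2 y ^+ L2.
Hypothesis g_le : forall x y, norm2 (g (x, y)) <= G x y.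
Hypothesis dg_le : forall x y d, norm2 ('d (fun z => g (z, y)) x d) <= G x y * norm2 d.
Context {x0 : 'cV[R]_nx} {tau : R} {v : 'cV[R]_m}.
Hypothesis v_le : norm2 v <= rho.

Definition f_offset : R := 2 * norm2 (f (0, 0)) + 2 * K1 * rho.
Definition state_gain : R := expR (1 + 2 * (2 * K1) ^+ 2).
Definition sens_gain : R := expR (1 + 2 * K1 ^+ 2).
Definition reset_gain (C : R) : R := K2 + K3 * C ^+ L1 + K4 + K5 * C ^+ L1.

(* A reset through [g], of degree [L1] in the state and [L2] in the
   observation, raises the degree [D] of the bound in the [1 + norm2 (y j)]
   to [D * L1.+1 + L2]. *)
Fixpoint mode_const (k : nat) : R :=
  if k is k'.+1 then
    let M := reset_gain (mode_const k') in
    state_gain * (M + 2 * f_offset) + sens_gain * (M * mode_const k')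
  else state_gain * (norm2 x0 + 2 * f_offset) + sens_gain * (4 * K1 * rho).

Fixpoint mode_deg (k : nat) : nat := if k is k'.+1 then mode_deg k' * L1.+1 + L2 else 0.

Let K1_ge0 : 0 <= K1. Proof. exact: le_trans ler01 K1_ge1. Qed.

Lemma f_offset_ge0 : 0 <= f_offset.
Proof. by rewrite addr_ge0 ?mulr_ge0 ?norm2_ge0. Qed.

Lemma reset_gain_ge0 C : 0 <= C -> 0 <= reset_gain C.
Proof. by move=> C0; rewrite !addr_ge0 ?mulr_ge0 ?exprn_ge0. Qed.

Lemma mode_const_ge0 k : 0 <= mode_const k.
Proof.
have state0 : 0 <= state_gain by exact: expR_ge0.
have sens0 : 0 <= sens_gain by exact: expR_ge0.
have offset0 : 0 <= 2 * f_offset by rewrite mulr_ge0 ?f_offset_ge0.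
elim: k => [|k IH] /=; apply: addr_ge0; apply: mulr_ge0 => //.
- by rewrite addr_ge0 ?norm2_ge0.
- by rewrite !mulr_ge0.
- by rewrite addr_ge0 ?reset_gain_ge0.
- by rewrite mulr_ge0 ?reset_gain_ge0.
Qed.

Lemma f_growth x w : norm2 w <= rho -> norm2 (f (x, w)) <= f_offset + 2 * K1 * norm2 x.
Proof.
move=> w_le; have := norm2D_le (f (x, w) - f (0, 0)) (f (0, 0)); rewrite subrK => f_le.
have := f_lip x 0 w 0 w_le; rewrite norm20 !subr0 => /(_ rho_ge0) f_lip0.
have K1w : K1 * norm2 w <= K1 * rho by rewrite ler_wpM2l.
rewrite /f_offset; lra.
Qed.

Lemma dx_f_le x w d : norm2 w <= rho -> norm2 (dx_f f x w d) <= K1 * norm2 d.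
Proof.
move=> w_le; apply: norm2_diff_le => [|a b].
  apply: differentiable_comp (f_diff _).
  by apply: differentiable_pair => //; exact: differentiable_cst.
by have := f_lip a b w w w_le w_le; rewrite subrr norm20 addr0.
Qed.

Context {u : R -> 'cV[R]_m} {y : nat -> 'cV[R]_ny} {eps : R}.
Context {xe Psi : nat -> R -> 'cV[R]_nx}.
Hypothesis u_adm : admissible T rho u.
Hypotheses (eps_ge0 : 0 <= eps) (eps_lt : eps < tau) (tau_le1 : tau <= 1).
Hypothesis xe_traj : hybrid_traj T f g x0 (needle u v tau eps) y xe.
Hypothesis Psi_pieces : psi_pieces T f g (needle u v tau eps) v tau eps y xe Psi.

Let ue := needle u v tau eps.

Definition mode_bound (k : nat) : R := mode_const k * obs_weight y k (mode_deg k).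

Let ue_le t : 0 <= t <= T%:R -> norm2 (ue t) <= rho.
Proof. by move=> t_0T; apply: needle_norm2_le v_le; exact: u_adm.2. Qed.

Let mode_norm2_le {n : nat} {a b al be : R} {F : R -> 'cV[R]_n -> 'cV[R]_n} {z0 X} :
  0 <= a -> b <= T%:R -> b <= a + 1 -> 0 <= al -> 0 <= be ->
  (forall t z, a < t < b -> norm2 (F t z) <= al + be * norm2 z) ->
  solves_on a b ue F z0 X ->
  forall t, a <= t <= b -> norm2 (X t) <= expR (1 + 2 * be ^+ 2) * (norm2 z0 + 2 * al).
Proof.
have [[s [u_cont _]] _] := u_adm; move=> a0 bT.
apply: solves_on_needle_norm2_le => t /andP[a_t t_b]; apply: u_cont.
by rewrite (le_lt_trans a0 a_t) (lt_le_trans t_b bT).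
Qed.

Let ue_le_on {a b : R} : 0 <= a -> b <= T%:R -> forall t, a < t < b -> norm2 (ue t) <= rho.
Proof.
move=> a0 bT t /andP[a_t t_b]; apply: ue_le.
by rewrite (le_trans a0 (ltW a_t)) (le_trans (ltW t_b) bT).
Qed.

Lemma mode1_state_le : (0 < T)%N ->
  norm2 (xe 1%N 1%:R) <= state_gain * (norm2 x0 + 2 * f_offset).
Proof.
move=> T0; have T1 : 1 <= T%:R :> R by rewrite ler1n.
apply: (mode_norm2_le (al := f_offset) (be := 2 * K1) (lexx 0) T1 _ f_offset_ge0 _ _ xe_traj.1).
- by rewrite add0r.
- by rewrite mulr_ge0.
- by move=> t z t01; apply: f_growth; exact: (ue_le_on (lexx (0 : R)) T1 t t01).
- by rewrite ler01 lexx.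
Qed.

Lemma mode1_sens_le : (0 < T)%N -> norm2 (Psi 1%N 1%:R) <= sens_gain * (4 * K1 * rho).
Proof.
move=> T0; have T1 : 1 <= T%:R :> R by rewrite ler1n.
have start0 : 0 <= tau - eps by rewrite subr_ge0 ltW.
have start1 : tau - eps <= 1 by move: eps_ge0 tau_le1; lra.
set w := ue (tau - eps); have w_le : norm2 w <= rho.
  by apply: ue_le; rewrite start0 (le_trans start1 T1).
apply: le_trans.
  apply: (mode_norm2_le (al := 0) (be := K1) start0 T1 _ (lexx 0) K1_ge0 _ Psi_pieces.1).
  - by rewrite lerDr.
  - by move=> t z t_in; rewrite add0r; apply: dx_f_le; exact: (ue_le_on start0 T1 t t_in).
  - by rewrite start1 lexx.
rewrite mulr0 addr0 ler_wpM2l ?expR_ge0 //.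
apply: le_trans (f_lip _ _ _ _ v_le w_le) _; rewrite subrr norm20 add0r.
have := norm2D_le v (- w); rewrite norm2N => vw_le.
by rewrite [4 * K1]mulrC -mulrA ler_wpM2l //; move: v_le; lra.
Qed.

Lemma reset_le {k} : norm2 (xe k.+1 k.+1%:R) <= mode_bound k ->
  G (xe k.+1 k.+1%:R) (y k.+1) * obs_weight y k (mode_deg k) <=
  reset_gain (mode_const k) * obs_weight y k.+1 (mode_deg k.+1).
Proof.
move=> xe_le; set Q := obs_weight y k (mode_deg k).
have Q1 : 1 <= Q := obs_weight_ge1 y k (mode_deg k).
have G_le := reset_poly_le L1 L2 K2_ge0 K3_ge0 K4_ge0 K5_ge0 (mode_const_ge0 k) Q1
  (norm2_ge0 (y k.+1)) (norm2_ge0 _) xe_le.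
apply: le_trans (ler_wpM2r (le_trans ler01 Q1) G_le) _.
rewrite -mulrA ler_wpM2l ?reset_gain_ge0 ?mode_const_ge0 //= -mulrA mulrCA -exprSr mulrC.
exact: obs_weight_next.
Qed.

Let mode_window {k} : (k.+2 <= T)%N ->
  [/\ 0 <= k.+1%:R :> R, k.+2%:R <= T%:R :> R & k.+2%:R <= k.+1%:R + 1 :> R].
Proof. by move=> kT; rewrite ler0n ler_nat kT -natr1 lexx. Qed.

Lemma state_next_le k : (k.+2 <= T)%N -> norm2 (xe k.+1 k.+1%:R) <= mode_bound k ->
  forall t, k.+1%:R <= t <= k.+2%:R -> norm2 (xe k.+2 t) <= mode_bound k.+1.
Proof.
move=> kT xe_le; have [k0 kT' k1] := mode_window kT.
have W1 := obs_weight_ge1 y k.+1 (mode_deg k.+1).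
set W := obs_weight y k.+1 (mode_deg k.+1) in W1 *; set M := reset_gain (mode_const k).
have g_reset : norm2 (g (xe k.+1 k.+1%:R, y k.+1)) <= M * W.
  apply: le_trans (g_le _ _) _; apply: le_trans _ (reset_le xe_le).
  rewrite ler_peMr ?obs_weight_ge1 //; exact: le_trans (norm2_ge0 _) (g_le _ _).
move=> t t_in; apply: le_trans.
  apply: (mode_norm2_le (al := f_offset) (be := 2 * K1) k0 kT' k1 f_offset_ge0 _ _
    (xe_traj.2 k.+2 kT) t t_in); first by rewrite mulr_ge0.
  by move=> r z r_in; apply: f_growth; exact: (ue_le_on k0 kT' r r_in).
have state0 : 0 <= state_gain by exact: expR_ge0.
have sens0 : 0 <= sens_gain * (M * mode_const k).
  by rewrite !mulr_ge0 ?expR_ge0 ?reset_gain_ge0 ?mode_const_ge0.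
have -> : mode_bound k.+1 =
    (state_gain * (M + 2 * f_offset) + sens_gain * (M * mode_const k)) * W by [].
apply: (@le_trans _ _ (state_gain * (M + 2 * f_offset) * W)).
  rewrite -mulrA ler_wpM2l // (mulrDl M); apply: lerD; first exact: g_reset.
  by rewrite ler_peMr // mulr_ge0 ?f_offset_ge0.
by rewrite ler_wpM2r ?lerDl // (le_trans ler01 W1).
Qed.

Lemma sens_next_le k : (k.+2 <= T)%N -> norm2 (xe k.+1 k.+1%:R) <= mode_bound k ->
  norm2 (Psi k.+1 k.+1%:R) <= mode_bound k ->
  forall t, k.+1%:R <= t <= k.+2%:R -> norm2 (Psi k.+2 t) <= mode_bound k.+1.
Proof.
move=> kT xe_le Psi_le; have [k0 kT' k1] := mode_window kT.
set W := obs_weight y k.+1 (mode_deg k.+1); set M := reset_gain (mode_const k).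
have dg_reset : norm2 ('d (fun z => g (z, y k.+1)) (xe k.+1 k.+1%:R) (Psi k.+1 k.+1%:R))
    <= mode_const k * (M * W).
  have G0 := le_trans (norm2_ge0 _) (g_le (xe k.+1 k.+1%:R) (y k.+1)).
  apply: le_trans (dg_le _ _ _) _; apply: le_trans (ler_wpM2l G0 Psi_le) _.
  by rewrite /mode_bound mulrCA ler_wpM2l ?mode_const_ge0 ?reset_le.
move=> t t_in; apply: le_trans.
  apply: (mode_norm2_le (al := 0) (be := K1) k0 kT' k1 (lexx 0) K1_ge0 _
    (Psi_pieces.2 k.+2 kT) t t_in).
  by move=> r z r_in; rewrite add0r; apply: dx_f_le; exact: (ue_le_on k0 kT' r r_in).
have W0 : 0 <= W := obs_weight_ge0 y k.+1 (mode_deg k.+1).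
have -> : mode_bound k.+1 =
    (state_gain * (M + 2 * f_offset) + sens_gain * (M * mode_const k)) * W by [].
rewrite mulr0 addr0; apply: (@le_trans _ _ (sens_gain * (M * mode_const k) * W)).
  by rewrite -!mulrA ler_wpM2l ?expR_ge0 // mulrCA.
rewrite ler_wpM2r // lerDr mulr_ge0 ?expR_ge0 // addr_ge0 ?reset_gain_ge0 ?mode_const_ge0 //.
by rewrite mulr_ge0 ?f_offset_ge0.
Qed.

Lemma mode_endpoint_le k : (k < T)%N ->
  norm2 (xe k.+1 k.+1%:R) <= mode_bound k /\ norm2 (Psi k.+1 k.+1%:R) <= mode_bound k.
Proof.
elim: k => [T0|k IH kT].
  rewrite /mode_bound /obs_weight big_ord0 mulr1 /=.
  have state0 : 0 <= state_gain * (norm2 x0 + 2 * f_offset).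
    by rewrite mulr_ge0 ?expR_ge0 ?addr_ge0 ?norm2_ge0 ?mulr_ge0 ?f_offset_ge0.
  have sens0 : 0 <= sens_gain * (4 * K1 * rho) by rewrite !mulr_ge0 ?expR_ge0.
  split.
  - by apply: le_trans (mode1_state_le T0) _; rewrite lerDl.
  - by apply: le_trans (mode1_sens_le T0) _; rewrite lerDr.
have [xe_le Psi_le] := IH (ltnW kT).
have t_in : (k.+1%:R : R) <= k.+2%:R <= k.+2%:R by rewrite ler_nat leqnSn /=.
by split; [exact: state_next_le | exact: sens_next_le].
Qed.

Lemma sens_le i t : (2 <= i <= T)%N -> i.-1%:R <= t <= i%:R ->
  norm2 (Psi i t) <= mode_bound i.-1.
Proof.
case: i => [|[|k]] //= iT t_in; have [xe_le Psi_le] := mode_endpoint_le k (ltnW iT).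
exact: sens_next_le.
Qed.

End ModeBounds.

Theorem proposition10 (R : realType) (T m nx ny : nat) (rho : R)
  (f : 'cV[R]_nx * 'cV[R]_m -> 'cV[R]_nx)
  (g : 'cV[R]_nx * 'cV[R]_ny -> 'cV[R]_nx)
  (K1 K2 K3 K4 K5 : R) (L1 L2 : nat) :
  (0 < T)%N -> (0 < m)%N -> (0 < nx)%N -> (0 < ny)%N -> 0 < rho ->
  (* f continuously differentiable *)
  (forall p, differentiable f p) ->
  (forall d, continuous (fun p => 'd f p d)) ->
  (* Lipschitz condition, K1 >= 1 *)
  1 <= K1 ->
  (forall x' x'' u' u'', norm2 u' <= rho -> norm2 u'' <= rho ->
     norm2 (f (x', u') - f (x'', u''))
       <= K1 * (norm2 (x' - x'') + norm2 (u' - u''))) ->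
  (* g continuous and differentiable in its first argument *)
  continuous g ->
  (forall x y, differentiable (fun z => g (z, y)) x) ->
  0 <= K2 -> 0 <= K3 -> 0 <= K4 -> 0 <= K5 -> (0 < L1)%N -> (0 < L2)%N ->
  (forall x y, norm2 (g (x, y)) <=
     K2 + K3 * norm2 x ^+ L1 + K4 * norm2 y ^+ L2
        + K5 * norm2 x ^+ L1 * norm2 y ^+ L2) ->
  (* bound on the induced 2-norm of the Jacobian dg/dx *)
  (forall x y d, norm2 ('d (fun z => g (z, y)) x d) <=
     (K2 + K3 * norm2 x ^+ L1 + K4 * norm2 y ^+ L2
        + K5 * norm2 x ^+ L1 * norm2 y ^+ L2) * norm2 d) ->
  forall (x0 : 'cV[R]_nx) (tau : R) (v : 'cV[R]_m),
  0 < tau < 1 -> norm2 v <= rho ->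
  exists (L : nat -> seq (seq nat)) (beta : nat -> seq nat -> R),
    (forall i, (2 <= i <= T)%N ->
       uniq (L i) /\
       (forall j, j \in L i -> size j = i.-1 /\ 0 < beta i j)) /\
    forall (u : R -> 'cV[R]_m),
      admissible T rho u ->
      u t @[t --> tau^'-] --> u tau ->
    forall (y : nat -> 'cV[R]_ny) (eps : R),
      0 <= eps < tau ->
    forall (xe Psi : nat -> R -> 'cV[R]_nx),
      hybrid_traj T f g x0 (needle u v tau eps) y xe ->
      psi_pieces T f g (needle u v tau eps) v tau eps y xe Psi ->
    forall (i : nat) (t : R),
      (2 <= i <= T)%N -> (i.-1)%:R <= t <= i%:R ->
      norm2 (Psi i t) <=
        \sum_(j <- L i) beta i j *
           \prod_(k < i.-1) norm2 (y k.+1) ^+ (nth 0%N j k).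
Proof.
move=> _ _ _ _ /ltW rho_ge0 f_diff _ K1_ge1 f_lip _ _ K2_ge0 K3_ge0 K4_ge0 K5_ge0 _ _ g_le dg_le
  x0 tau v /andP[_ tau_lt1] v_le.
pose D (i : nat) := @mode_deg L1 L2 i.-1.
pose C (i : nat) := @mode_const R m nx rho f K1 K2 K3 K4 K5 L1 x0 i.-1.
have C_ge0 i : 0 <= C i by apply: mode_const_ge0.
exists (fun i => seqs0D i.-1 (D i).+1), (fun i _ => (C i + 1) * 2 ^+ ((D i).+1 * i.-1)).
split=> [i _|u u_adm _ y eps /andP[eps_ge0 eps_lt] xe Psi xe_traj Psi_pieces i t iT t_in].
  split=> [|j /size_seqs0D ->]; first exact: uniq_seqs0D.
  by split=> //; rewrite mulr_gt0 ?exprn_gt0 // ltr_wpDl.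
apply: le_trans _ (scaled_obs_weight_le_poly y i.-1 (D i) (C_ge0 i)).
exact: (sens_le rho_ge0 f_diff K1_ge1 f_lip K2_ge0 K3_ge0 K4_ge0 K5_ge0 g_le dg_le v_le
  u_adm eps_ge0 eps_lt (ltW tau_lt1) xe_traj Psi_pieces i t iT t_in).
Qed.
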